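(* There is an absolute constant $c$ such that the following holds. Let $K$ be any field, $n\ge3$, $V$ an $n$-dimensional $K$-vector space, and let $1\le k\le 5$. Let $r_1=1+v_1\otimes\phi_1,\ldots,r_k=1+v_k\otimes\phi_k$ be a directed path of transvections, i.e. pairwise distinct transvections with $(r_i,r_{i+1})$ an edge for $1\le i<k$. Assume that if $k=3$ then at least one of $(r_1,r_2)$, $(r_2,r_3)$ is one-way directed, and if $4\le k\le 5$ then both $(r_1,r_2)$ and $(r_{k-1},r_k)$ are one-way directed. Let $Z=r_1^K\cup\cdots\cup r_k^K$. Then there is $\psi\in V^*$ such that $s:=1+(v_1+v_k)\otimes\psi$ is a transvection with $\ell_Z(s^K)\le c$. Similarly, there is $w\in V$ such that $t:=1+w\otimes(\phi_1+\phi_k)$ is a transvection with $\ell_Z(t)\le c$.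
   Context: A transvection is an element $1+d\otimes\phi\in SL(V)$ acting by $x\mapsto x+\phi(x)d$ with $d\in V$, $\phi\in V^*$, $\phi(d)=0$ (the identity is allowed as the trivial transvection; proper transvections have $d\neq0$, $\phi\neq0$). For $r=1+d\otimes\phi$ and $\lambda\in K$, $r^\lambda=1+\lambda d\otimes\phi$, $r^K=\{r^\lambda:\lambda\in K\}$. An edge $(r,s)$ between proper transvections $r=1+d_1\otimes\phi_1$, $s=1+d_2\otimes\phi_2$ means $\phi_2(d_1)\neq0$; it is one-way directed if $(s,r)$ is not an edge. For $A,B\subseteq SL(V)$, $A^m$ is the set of products of $m$ elements of $A$ and $\ell_A(B)=\min\{m:B\subseteq A^m\}$. *)

From HB Require Import structures.
From mathcomp Require Import all_boot all_order all_algebra.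
Set Implicit Arguments. Unset Strict Implicit. Unset Printing Implicit Defensive.
Import GRing.Theory.
Local Open Scope ring_scope.

(* V = K^n as column vectors 'cV[K]_n, V^* = row vectors 'rV[K]_n,
   phi(x) = (phi *m x) 0 0.  Elements of SL(V) are n x n matrices acting
   on column vectors, so 1 + d (x) phi is the matrix 1 + d *m phi. *)

Definition pairing (K : fieldType) (n : nat) (phi : 'rV[K]_n) (x : 'cV[K]_n) : K :=
  (phi *m x) 0 0.

Definition tv (K : fieldType) (n : nat) (d : 'cV[K]_n) (phi : 'rV[K]_n) : 'M[K]_n :=
  1%:M + d *m phi.

Definition edge (K : fieldType) (n : nat) (d1 : 'cV[K]_n) (phi1 : 'rV[K]_n)
  (d2 : 'cV[K]_n) (phi2 : 'rV[K]_n) : Prop :=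
  pairing phi2 d1 <> 0.

Definition one_way (K : fieldType) (n : nat) (d1 : 'cV[K]_n) (phi1 : 'rV[K]_n)
  (d2 : 'cV[K]_n) (phi2 : 'rV[K]_n) : Prop :=
  edge d1 phi1 d2 phi2 /\ ~ edge d2 phi2 d1 phi1.

Definition prod_pow (K : fieldType) (n : nat) (A : 'M[K]_n -> Prop) (m : nat)
  (M : 'M[K]_n) : Prop :=
  exists s : seq 'M[K]_n,
    size s = m /\ (forall x, x \in s -> A x) /\ M = foldr mulmx 1%:M s.

Definition length_le (K : fieldType) (n : nat) (A B : 'M[K]_n -> Prop) (c : nat) : Prop :=
  exists m, (m <= c)%N /\ forall M, B M -> prod_pow A m M.

Definition tv_line (K : fieldType) (n : nat) (d : 'cV[K]_n) (phi : 'rV[K]_n)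
  (M : 'M[K]_n) : Prop :=
  exists lambda : K, M = tv (lambda *: d) phi.

(* For [a(x) = 0] write [x (x) a] for the root group {1 + l x (x) a : l in K}.
   Three identities manufacture such root groups from [Z]: root groups sharing a
   form (or a vector) multiply, [x (x) a] [y (x) a] = [(x + y) (x) a]; conjugating
   [x (x) a] by an element of [y (x) b] gives [(x + mu b(x) y) (x) (a - mu a(y) b)];
   and if [b(x) = 0 <> a(y)], commutators of [x (x) a] with [y (x) b] fill
   [x (x) b].  Starting from the root groups [r_i^K] of [Z], a case analysis on
   which pairings [phi_j(v_i)] vanish yields a nonzero [psi] with
   [(v_1 + v_k) (x) psi] inside [Z^m] for some [m <= 100].  Transposition swaps
   vectors and forms and reverses products, so the claim about [phi_1 + phi_k] is
   the same result for the transposed path traversed backwards. *)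

From HB Require Import structures.
From mathcomp Require Import all_boot all_order all_algebra.
From mathcomp Require Import ring zify.
Set Implicit Arguments. Unset Strict Implicit. Unset Printing Implicit Defensive.
Import GRing.Theory.
Local Open Scope ring_scope.

Local Ltac mx_ring := apply/matrixP => i j; rewrite !(mxE, big_ord1); ring.

Section Transvections.
Variables (K : fieldType) (n : nat).
Implicit Types (a b : 'rV[K]_n) (x y : 'cV[K]_n) (c : K).

Lemma pairing_mx a x : a *m x = (pairing a x)%:M.
Proof. by rewrite /pairing {1}[a *m x]mx11_scalar. Qed.

Lemma pairingDl a b x : pairing (a + b) x = pairing a x + pairing b x.
Proof. by rewrite /pairing mulmxDl mxE. Qed.

Lemma pairingDr a x y : pairing a (x + y) = pairing a x + pairing a y.
Proof. by rewrite /pairing mulmxDr mxE. Qed.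

Lemma pairingNl a x : pairing (- a) x = - pairing a x.
Proof. by rewrite /pairing mulNmx mxE. Qed.

Lemma pairingZl c a x : pairing (c *: a) x = c * pairing a x.
Proof. by rewrite /pairing -scalemxAl mxE. Qed.

Lemma pairingZr c a x : pairing a (c *: x) = c * pairing a x.
Proof. by rewrite /pairing -scalemxAr mxE. Qed.

Lemma pairing_trmx a x : pairing x^T a^T = pairing a x.
Proof. by rewrite /pairing -trmx_mul mxE. Qed.

Lemma mul_rank1 x y a b : (x *m a) *m (y *m b) = pairing a y *: (x *m b).
Proof. by rewrite mulmxA -(mulmxA x) pairing_mx mul_mx_scalar -scalemxAl. Qed.

Lemma tv_mul x y a b :
  tv x a *m tv y b = 1%:M + x *m a + y *m b + pairing a y *: (x *m b).
Proof.
rewrite /tv mulmxDl mulmxDr !mul1mx mulmxDr mulmx1 mul_rank1.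
by rewrite !addrA (addrAC _ (y *m b)).
Qed.

Lemma tv_trmx x a : (tv x a)^T = tv a^T x^T.
Proof. by rewrite /tv linearD /= trmx1 trmx_mul. Qed.

End Transvections.

Definition pairingE := (pairingDl, pairingDr, pairingNl, pairingZl, pairingZr).

Section Products.
Variables (K : fieldType) (n : nat) (Z : 'M[K]_n -> Prop).

Lemma foldr_mulmx_cat (s1 s2 : seq 'M[K]_n) :
  foldr mulmx 1%:M (s1 ++ s2) = foldr mulmx 1%:M s1 *m foldr mulmx 1%:M s2.
Proof. by elim: s1 => [|A s IH] /=; rewrite ?mul1mx // IH mulmxA. Qed.

Lemma prod_pow1 M : Z M -> prod_pow Z 1 M.
Proof.
move=> ZM; exists [:: M]; split=> //; split; last by rewrite /= mulmx1.
by move=> A; rewrite inE => /eqP ->.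
Qed.

Lemma prod_pow_mul m1 m2 A B :
  prod_pow Z m1 A -> prod_pow Z m2 B -> prod_pow Z (m1 + m2) (A *m B).
Proof.
move=> [s1 [<- [Zs1 ->]]] [s2 [<- [Zs2 ->]]]; exists (s1 ++ s2).
rewrite size_cat foldr_mulmx_cat; split=> //; split=> // M.
by rewrite mem_cat => /orP [/Zs1 | /Zs2].
Qed.

End Products.

Lemma prod_pow_trmx (K : fieldType) n (Z1 Z2 : 'M[K]_n -> Prop) m M :
  (forall N, Z1 N -> Z2 N^T) -> prod_pow Z1 m M -> prod_pow Z2 m M^T.
Proof.
move=> Z12 [s [<- [Zs ->]]]; exists (rev (map trmx s)); rewrite size_rev size_map.
split=> //; split.
  by move=> N; rewrite mem_rev => /mapP [A /Zs /Z12 ZA ->].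
elim: s {Zs} => [|A s IH] /=; first by rewrite trmx1.
by rewrite trmx_mul IH rev_cons -cats1 foldr_mulmx_cat /= mulmx1.
Qed.

Section RootGroups.
Variables (K : fieldType) (n : nat) (Z : 'M[K]_n -> Prop).
Implicit Types (a b c : 'rV[K]_n) (x y : 'cV[K]_n).

Definition rootgroup_in m x a :=
  pairing a x = 0 /\ forall l : K, prod_pow Z m (tv (l *: x) a).

Lemma rootgroup_in1 x a :
  pairing a x = 0 -> (forall l, Z (tv (l *: x) a)) -> rootgroup_in 1 x a.
Proof. by move=> ax0 Zxa; split=> // l; apply: prod_pow1. Qed.

Lemma rootgroup_inZv m (mu : K) x a : rootgroup_in m x a -> rootgroup_in m (mu *: x) a.
Proof. by move=> [ax0 Zxa]; split=> [|l]; rewrite ?pairingZr ?ax0 ?mulr0 // scalerA. Qed.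

Lemma rootgroup_inZf m (mu : K) x a : rootgroup_in m x a -> rootgroup_in m x (mu *: a).
Proof.
move=> [ax0 Zxa]; split=> [|l]; first by rewrite pairingZl ax0 mulr0.
have -> : tv (l *: x) (mu *: a) = tv ((l * mu) *: x) a by rewrite /tv; mx_ring.
exact: Zxa.
Qed.

Lemma rootgroup_inDv m1 m2 x y a :
  rootgroup_in m1 x a -> rootgroup_in m2 y a -> rootgroup_in (m1 + m2) (x + y) a.
Proof.
move=> [ax0 Zxa] [ay0 Zya]; split=> [|l]; first by rewrite pairingDr ax0 ay0 addr0.
have -> : tv (l *: (x + y)) a = tv (l *: x) a *m tv (l *: y) a.
  by rewrite tv_mul pairingZr ay0 mulr0 /tv; mx_ring.
exact: prod_pow_mul.
Qed.

Lemma rootgroup_inDf m1 m2 x a b :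
  rootgroup_in m1 x a -> rootgroup_in m2 x b -> rootgroup_in (m1 + m2) x (a + b).
Proof.
move=> [ax0 Zxa] [bx0 Zxb]; split=> [|l]; first by rewrite pairingDl ax0 bx0 addr0.
have -> : tv (l *: x) (a + b) = tv (l *: x) a *m tv (l *: x) b.
  by rewrite tv_mul pairingZr ax0 mulr0 /tv; mx_ring.
exact: prod_pow_mul.
Qed.

Lemma rootgroup_inBv m1 m2 x y a :
  rootgroup_in m1 x a -> rootgroup_in m2 y a -> rootgroup_in (m1 + m2) (x - y) a.
Proof. by move=> Rx /(rootgroup_inZv (-1)); rewrite scaleN1r; apply: rootgroup_inDv. Qed.

Lemma rootgroup_inBf m1 m2 x a b :
  rootgroup_in m1 x a -> rootgroup_in m2 x b -> rootgroup_in (m1 + m2) x (a - b).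
Proof. by move=> Ra /(rootgroup_inZf (-1)); rewrite scaleN1r; apply: rootgroup_inDf. Qed.

Lemma tv_conj (mu : K) x y a b : pairing b y = 0 ->
  tv (mu *: y) b *m tv x a *m tv (- mu *: y) b =
  tv (x + (mu * pairing b x) *: y) (a - (mu * pairing a y) *: b).
Proof.
move=> by0.
have -> : tv (mu *: y) b *m tv x a =
    tv (x + (mu * pairing b x) *: y) (a - (mu * pairing a y) *: b) *m tv (mu *: y) b.
  by rewrite !tv_mul !pairingE by0 /tv; mx_ring.
have inv_tv : tv (mu *: y) b *m tv (- mu *: y) b = 1%:M.
  by rewrite tv_mul !pairingE by0 /tv; mx_ring.
by rewrite -mulmxA inv_tv mulmx1.
Qed.

Lemma rootgroup_in_conj m1 m2 (mu : K) x y a b :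
  rootgroup_in m1 x a -> rootgroup_in m2 y b ->
  rootgroup_in (m2 + m1 + m2) (x + (mu * pairing b x) *: y) (a - (mu * pairing a y) *: b).
Proof.
move=> [ax0 Zxa] [by0 Zyb]; split=> [|l]; first by rewrite !pairingE ax0 by0; ring.
have -> : tv (l *: (x + (mu * pairing b x) *: y)) (a - (mu * pairing a y) *: b) =
    tv (mu *: y) b *m tv (l *: x) a *m tv (- mu *: y) b.
  by rewrite tv_conj // !pairingE; congr tv; mx_ring.
by apply: prod_pow_mul; first apply: prod_pow_mul.
Qed.

(* Every element of [x (x) b] is a commutator of elements of [x (x) a] and [y (x) b]. *)
Lemma rootgroup_in_comm m1 m2 x y a b :
  rootgroup_in m1 x a -> rootgroup_in m2 y b -> pairing b x = 0 -> pairing a y != 0 ->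
  rootgroup_in (m1 + m2 + m1 + m2) x b.
Proof.
move=> [ax0 Zxa] [by0 Zyb] bx0 ay_neq0; split=> // l.
have -> : tv (l *: x) b = tv ((l / pairing a y) *: x) a *m tv (1 *: y) b *m
    tv (- (l / pairing a y) *: x) a *m tv ((-1) *: y) b.
  rewrite tv_conj // tv_mul !pairingE bx0 by0 /tv.
  by apply/matrixP => i j; rewrite !(mxE, big_ord1); field.
by apply: prod_pow_mul => //; apply: prod_pow_mul => //; apply: prod_pow_mul.
Qed.

(* [pairing b y *: a - pairing a y *: b] is the combination of [a] and [b] that
   vanishes at [y]; conjugating by [y (x) c] transports the root groups at [x]
   to one at a multiple of [y]. *)
Lemma rootgroup_in_shift m1 m2 m3 x y a b c :
  rootgroup_in m1 x a -> rootgroup_in m2 x b -> rootgroup_in m3 y c ->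
  rootgroup_in (m3 + m1 + m3 + (m3 + m2 + m3) + (m1 + m2))
    (pairing c x *: y) (pairing b y *: a - pairing a y *: b).
Proof.
move=> Ra Rb Rc.
have Qa := rootgroup_inZf (pairing b y) (rootgroup_in_conj 1 Ra Rc).
have Qb := rootgroup_inZf (pairing a y) (rootgroup_in_conj 1 Rb Rc).
have R := rootgroup_inBf (rootgroup_inZf (pairing b y) Ra) (rootgroup_inZf (pairing a y) Rb).
have Q := rootgroup_inBf Qa Qb.
have -> : pairing c x *: y = x + (1 * pairing c x) *: y - x by rewrite mul1r addrAC subrr add0r.
have form_eq : pairing b y *: (a - (1 * pairing a y) *: c) -
    pairing a y *: (b - (1 * pairing b y) *: c) = pairing b y *: a - pairing a y *: b.
  by mx_ring.
rewrite form_eq in Q; exact: rootgroup_inBv Q R.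
Qed.

Definition short_root (u : 'cV[K]_n) :=
  exists (psi : 'rV[K]_n) (m : nat), [/\ psi != 0, (m <= 100)%N & rootgroup_in m u psi].

Lemma short_root_add m1 m2 x y a :
  rootgroup_in m1 x a -> rootgroup_in m2 y a -> a != 0 -> (m1 + m2 <= 100)%N ->
  short_root (x + y).
Proof. by move=> Rx Ry a_neq0 le_m; exists a, (m1 + m2); split=> //; apply: rootgroup_inDv. Qed.

Lemma short_root_conj m1 m2 x y a b :
  rootgroup_in m1 x a -> rootgroup_in m2 y b -> pairing b x != 0 -> a != 0 ->
  (m2 + m1 + m2 <= 100)%N -> short_root (x + y).
Proof.
move=> Rx Ry bx_neq0 a_neq0 le_m.
have := rootgroup_in_conj (pairing b x)^-1 Rx Ry; rewrite mulVf // scale1r => R.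
exists (a - ((pairing b x)^-1 * pairing a y) *: b), (m2 + m1 + m2); split=> //.
apply: contra a_neq0; rewrite subr_eq0 => /eqP a_eq.
have ay0 : pairing a y = 0 by rewrite {1}a_eq pairingZl Ry.1 mulr0.
by rewrite a_eq ay0 mulr0 scale0r.
Qed.

Lemma short_root_shift m0 m1 m2 m3 x0 x y a0 a b c :
  rootgroup_in m0 x0 a0 -> rootgroup_in m1 x a -> rootgroup_in m2 x b ->
  rootgroup_in m3 y c -> pairing a x0 = 0 -> pairing b x0 = 0 ->
  pairing c x != 0 -> pairing a0 y != 0 -> pairing b y *: a - pairing a y *: b != 0 ->
  let m := m3 + m1 + m3 + (m3 + m2 + m3) + (m1 + m2) in
  (m0 + m + m0 + m + (m1 + m2) <= 100)%N -> short_root (x0 + x).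
Proof.
move=> R0 Ra Rb Rc ax0 bx0 cx_neq0 a0y_neq0 psi_neq0 m le_m.
have psi_x0 : pairing (pairing b y *: a - pairing a y *: b) x0 = 0.
  by rewrite !pairingE ax0 bx0 !mulr0 oppr0 addr0.
have a0_cxy : pairing a0 (pairing c x *: y) != 0 by rewrite pairingZr mulf_neq0.
have C := rootgroup_in_comm R0 (rootgroup_in_shift Ra Rb Rc) psi_x0 a0_cxy.
have D := rootgroup_inBf (rootgroup_inZf (pairing b y) Ra) (rootgroup_inZf (pairing a y) Rb).
exact: short_root_add C D psi_neq0 le_m.
Qed.

End RootGroups.

Section PathEnds.
Variables (K : fieldType) (n : nat) (Z : 'M[K]_n -> Prop) (k : nat).
Variables (v : nat -> 'cV[K]_n) (f : nat -> 'rV[K]_n).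
Hypothesis root_v : forall i, (i < k)%N -> rootgroup_in Z 1 (v i) (f i).
Hypothesis f_neq0 : forall i, (i < k)%N -> f i != 0.
Hypothesis edge_v : forall i, (i.+1 < k)%N -> pairing (f i.+1) (v i) != 0.

Lemma short_root_ends1 : (0 < k)%N -> short_root Z (v 0 + v 0).
Proof. by move=> k_gt0; apply: (short_root_add (root_v k_gt0) (root_v k_gt0) (f_neq0 k_gt0)). Qed.

Lemma short_root_ends2 : (1 < k)%N -> short_root Z (v 0 + v 1).
Proof.
move=> k_gt1; have k_gt0 := ltnW k_gt1.
by apply: (short_root_conj (root_v k_gt0) (root_v k_gt1) (edge_v k_gt1) (f_neq0 k_gt0)).
Qed.

Lemma short_root_ends3 : (2 < k)%N ->
  pairing (f 0) (v 1) = 0 \/ pairing (f 1) (v 2) = 0 -> short_root Z (v 0 + v 2).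
Proof.
move=> k_gt2 one_way.
have R i : (i < 3)%N -> rootgroup_in Z 1 (v i) (f i) := fun lt_i => root_v (leq_trans lt_i k_gt2).
have F i : (i < 3)%N -> f i != 0 := fun lt_i => f_neq0 (leq_trans lt_i k_gt2).
have E i : (i.+1 < 3)%N -> pairing (f i.+1) (v i) != 0 := fun lt_i => edge_v (leq_trans lt_i k_gt2).
have [p20|p20] := eqVneq (pairing (f 0) (v 2)) 0; last first.
  by rewrite addrC; apply: (short_root_conj (R 2 isT) (R 0 isT) p20 (F 2 isT)).
have [p02|p02] := eqVneq (pairing (f 2) (v 0)) 0; last first.
  by apply: (short_root_conj (R 0 isT) (R 2 isT) p02 (F 0 isT)).
case: one_way => [p10|p21].
  have C1 := rootgroup_in_comm (R 1 isT) (R 0 isT) p10 (E 0 isT).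
  have C2 := rootgroup_in_comm (R 2 isT) C1 p20 (E 1 isT).
  by apply: (short_root_add (R 0 isT) C2 (F 0 isT)).
have C := rootgroup_in_comm (R 2 isT) (R 1 isT) p21 (E 1 isT).
by apply: (short_root_conj (R 0 isT) C (E 0 isT) (F 0 isT)).
Qed.

Lemma short_root_ends4 : (3 < k)%N ->
  pairing (f 0) (v 1) = 0 -> pairing (f 2) (v 3) = 0 -> short_root Z (v 0 + v 3).
Proof.
move=> k_gt3 p10 p32.
have R i : (i < 4)%N -> rootgroup_in Z 1 (v i) (f i) := fun lt_i => root_v (leq_trans lt_i k_gt3).
have F i : (i < 4)%N -> f i != 0 := fun lt_i => f_neq0 (leq_trans lt_i k_gt3).
have E i : (i.+1 < 4)%N -> pairing (f i.+1) (v i) != 0 := fun lt_i => edge_v (leq_trans lt_i k_gt3).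
have [p30|p30] := eqVneq (pairing (f 0) (v 3)) 0; last first.
  by rewrite addrC; apply: (short_root_conj (R 3 isT) (R 0 isT) p30 (F 3 isT)).
have [p03|p03] := eqVneq (pairing (f 3) (v 0)) 0; last first.
  by apply: (short_root_conj (R 0 isT) (R 3 isT) p03 (F 0 isT)).
have [p20|p20] := eqVneq (pairing (f 0) (v 2)) 0.
  have C1 := rootgroup_in_comm (R 1 isT) (R 0 isT) p10 (E 0 isT).
  have C2 := rootgroup_in_comm (R 2 isT) C1 p20 (E 1 isT).
  have C3 := rootgroup_in_comm (R 3 isT) C2 p30 (E 2 isT).
  by apply: (short_root_add (R 0 isT) C3 (F 0 isT)).
have D := rootgroup_in_comm (R 3 isT) (R 2 isT) p32 (E 2 isT).
have [p02|p02] := eqVneq (pairing (f 2) (v 0)) 0; last first.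
  by apply: (short_root_conj (R 0 isT) D p02 (F 0 isT)).
have C := rootgroup_in_comm (R 0 isT) (R 2 isT) p02 p20.
by apply: (short_root_add C D (F 2 isT)).
Qed.

Lemma short_root_ends5 : (4 < k)%N ->
  pairing (f 0) (v 1) = 0 -> pairing (f 3) (v 4) = 0 -> short_root Z (v 0 + v 4).
Proof.
move=> k_gt4 p10 p43.
have R i : (i < 5)%N -> rootgroup_in Z 1 (v i) (f i) := fun lt_i => root_v (leq_trans lt_i k_gt4).
have F i : (i < 5)%N -> f i != 0 := fun lt_i => f_neq0 (leq_trans lt_i k_gt4).
have E i : (i.+1 < 5)%N -> pairing (f i.+1) (v i) != 0 := fun lt_i => edge_v (leq_trans lt_i k_gt4).
have D := rootgroup_in_comm (R 4 isT) (R 3 isT) p43 (E 3 isT).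
have [p40|p40] := eqVneq (pairing (f 0) (v 4)) 0; last first.
  by rewrite addrC; apply: (short_root_conj (R 4 isT) (R 0 isT) p40 (F 4 isT)).
have [p04|p04] := eqVneq (pairing (f 4) (v 0)) 0; last first.
  by apply: (short_root_conj (R 0 isT) (R 4 isT) p04 (F 0 isT)).
have [p03|p03] := eqVneq (pairing (f 3) (v 0)) 0; last first.
  by apply: (short_root_conj (R 0 isT) D p03 (F 0 isT)).
have [p30|p30] := eqVneq (pairing (f 0) (v 3)) 0; last first.
  have C := rootgroup_in_comm (R 0 isT) (R 3 isT) p03 p30.
  by apply: (short_root_add C D (F 3 isT)).
have [p20|p20] := eqVneq (pairing (f 0) (v 2)) 0.
  have C1 := rootgroup_in_comm (R 1 isT) (R 0 isT) p10 (E 0 isT).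
  have C2 := rootgroup_in_comm (R 2 isT) C1 p20 (E 1 isT).
  have C3 := rootgroup_in_comm (R 3 isT) C2 p30 (E 2 isT).
  have C4 := rootgroup_in_comm (R 4 isT) C3 p40 (E 3 isT).
  by apply: (short_root_add (R 0 isT) C4 (F 0 isT)).
have [p42|p42] := eqVneq (pairing (f 2) (v 4)) 0.
  have D' := rootgroup_in_comm D (R 2 isT) p42 (E 2 isT).
  have [p02|p02] := eqVneq (pairing (f 2) (v 0)) 0; last first.
    by apply: (short_root_conj (R 0 isT) D' p02 (F 0 isT)).
  have C := rootgroup_in_comm (R 0 isT) (R 2 isT) p02 p20.
  by apply: (short_root_add C D' (F 2 isT)).
have psi_v3 : pairing (pairing (f 3) (v 2) *: f 4 - pairing (f 4) (v 2) *: f 3) (v 3) =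
    pairing (f 3) (v 2) * pairing (f 4) (v 3).
  by rewrite !pairingE (R 3 isT).1 mulr0 oppr0 addr0.
have psi_neq0 : pairing (f 3) (v 2) *: f 4 - pairing (f 4) (v 2) *: f 3 != 0.
  apply/eqP => psi0; move: (mulf_neq0 (E 2 isT) (E 3 isT)).
  by rewrite -psi_v3 psi0 /pairing mul0mx mxE eqxx.
exact: short_root_shift (R 0 isT) (R 4 isT) D (R 2 isT) p04 p03 p42 p20 psi_neq0 _.
Qed.

End PathEnds.

Lemma short_root_path_ends (K : fieldType) n (Z : 'M[K]_n -> Prop) k
    (v : nat -> 'cV[K]_n) (f : nat -> 'rV[K]_n) :
  (forall i, (i < k)%N -> rootgroup_in Z 1 (v i) (f i)) ->
  (forall i, (i < k)%N -> f i != 0) ->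
  (forall i, (i.+1 < k)%N -> pairing (f i.+1) (v i) != 0) ->
  (0 < k <= 5)%N ->
  (k = 3 -> pairing (f 0) (v 1) = 0 \/ pairing (f 1) (v 2) = 0) ->
  ((4 <= k <= 5)%N -> pairing (f 0) (v 1) = 0 /\ pairing (f k.-2) (v k.-1) = 0) ->
  short_root Z (v 0 + v k.-1).
Proof.
move=> root_v f_neq0 edge_v.
case: k root_v f_neq0 edge_v => [|[|[|[|[|[|k]]]]]] //= root_v f_neq0 edge_v _ one_way3 one_way45.
- exact: short_root_ends1 root_v f_neq0 _.
- exact: short_root_ends2 root_v f_neq0 edge_v _.
- exact: short_root_ends3 root_v f_neq0 edge_v _ (one_way3 erefl).
- by case: (one_way45 isT); apply: short_root_ends4 root_v f_neq0 edge_v _.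
- by case: (one_way45 isT); apply: short_root_ends5 root_v f_neq0 edge_v _.
Qed.

Lemma rootgroup_in_trmx (K : fieldType) n (Z : 'M[K]_n -> Prop) m x a :
  rootgroup_in Z m x a -> rootgroup_in (fun M => Z M^T) m a^T x^T.
Proof.
move=> [ax0 Zxa]; split=> [|l]; first by rewrite pairing_trmx.
have -> : tv (l *: a^T) x^T = (tv (l *: x) a)^T by rewrite tv_trmx /tv; mx_ring.
by apply: prod_pow_trmx (Zxa l) => N; rewrite trmxK.
Qed.

Lemma short_root_path_ends_trmx (K : fieldType) n (Z : 'M[K]_n -> Prop) k
    (v : nat -> 'cV[K]_n) (f : nat -> 'rV[K]_n) :
  (forall i, (i < k)%N -> rootgroup_in Z 1 (v i) (f i)) ->
  (forall i, (i < k)%N -> v i != 0) ->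
  (forall i, (i.+1 < k)%N -> pairing (f i.+1) (v i) != 0) ->
  (0 < k <= 5)%N ->
  (k = 3 -> pairing (f 0) (v 1) = 0 \/ pairing (f 1) (v 2) = 0) ->
  ((4 <= k <= 5)%N -> pairing (f 0) (v 1) = 0 /\ pairing (f k.-2) (v k.-1) = 0) ->
  short_root (fun M => Z M^T) ((f k.-1)^T + (f 0)^T).
Proof.
move=> root_v v_neq0 edge_v k_range one_way3 one_way45.
have rev_lt i : (i < k)%N -> (k.-1 - i < k)%N by lia.
have := @short_root_path_ends _ _ (fun M => Z M^T) k
  (fun i => (f (k.-1 - i)%N)^T) (fun i => (v (k.-1 - i)%N)^T).
rewrite subn0 subnn; apply=> //.
- by move=> i /rev_lt /root_v /rootgroup_in_trmx.
- by move=> i /rev_lt /v_neq0; rewrite trmx_eq0.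
- move=> i lt_i; rewrite pairing_trmx (_ : (k.-1 - i = (k.-1 - i.+1).+1)%N); last by lia.
  by apply: edge_v; lia.
- by move=> k3; rewrite k3 !pairing_trmx; case: (one_way3 k3); [right | left].
- move=> /[dup] k45 /one_way45 [p10 p_end].
  by rewrite subn1 (_ : (k.-1 - k.-2 = 1)%N) ?pairing_trmx //; lia.
Qed.

Lemma short_root_tv_line (K : fieldType) n (Z : 'M[K]_n -> Prop) u :
  short_root Z u ->
  exists psi, [/\ psi != 0, pairing psi u = 0 & length_le Z (tv_line u psi) 100].
Proof.
move=> [psi [m [psi_neq0 le_m [psi_u Zu]]]]; exists psi; split=> //.
by exists m; split=> // M [l ->].
Qed.

Lemma short_root_trmx_tv (K : fieldType) n (Z : 'M[K]_n -> Prop) (a b : 'rV[K]_n) :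
  short_root (fun M => Z M^T) (b^T + a^T) ->
  exists w, [/\ w != 0, pairing (a + b) w = 0 &
                length_le Z (fun M => M = tv w (a + b)) 100].
Proof.
have ab_trmx : a + b = (b^T + a^T)^T by rewrite linearD /= !trmxK addrC.
move=> [psi [m [psi_neq0 le_m [psi_u Zu]]]]; exists psi^T.
rewrite trmx_eq0 ab_trmx pairing_trmx; split=> //.
exists m; split=> // M ->; rewrite -tv_trmx -[b^T + a^T]scale1r.
by apply: prod_pow_trmx (Zu 1).
Qed.

Lemma one_way_pairing (K : fieldType) n (d1 d2 : 'cV[K]_n) (f1 f2 : 'rV[K]_n) :
  one_way d1 f1 d2 f2 -> pairing f1 d2 = 0.
Proof. by move=> [_ not_e]; case: (eqVneq (pairing f1 d2) 0) => // /eqP /not_e. Qed.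

Local Close Scope ring_scope.

Theorem lemma4p10 :
  exists c : nat,
  forall (K : fieldType) (n : nat), 3 <= n ->
  forall (k : nat), 1 <= k <= 5 ->
  forall (v : nat -> 'cV[K]_n) (phi : nat -> 'rV[K]_n),
    (* each r_i = 1 + v_i (x) phi_i is a proper transvection *)
    (forall i, i < k -> [/\ v i != 0%R, phi i != 0%R & pairing (phi i) (v i) = 0%R]) ->
    (* pairwise distinct *)
    (forall i j, i < k -> j < k -> i <> j ->
        tv (v i) (phi i) <> tv (v j) (phi j)) ->
    (* directed path *)
    (forall i, i.+1 < k -> edge (v i) (phi i) (v i.+1) (phi i.+1)) ->
    (k = 3 -> one_way (v 0) (phi 0) (v 1) (phi 1) \/
              one_way (v 1) (phi 1) (v 2) (phi 2)) ->
    (4 <= k <= 5 -> one_way (v 0) (phi 0) (v 1) (phi 1) /\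
              one_way (v k.-2) (phi k.-2) (v k.-1) (phi k.-1)) ->
    let Z := fun M : 'M[K]_n => exists2 i, i < k & tv_line (v i) (phi i) M in
    (exists psi : 'rV[K]_n,
        [/\ psi != 0%R, pairing psi (v 0%N + v k.-1)%R = 0%R &
            length_le Z (tv_line (v 0%N + v k.-1)%R psi) c]) /\
    (exists w : 'cV[K]_n,
        [/\ w != 0%R, pairing (phi 0%N + phi k.-1)%R w = 0%R &
            length_le Z (fun M => M = tv w (phi 0%N + phi k.-1)%R) c]).
Proof.
exists 100 => K n _ k k_range v phi proper _ path one_way3 one_way45 Z.
have root_v i : i < k -> rootgroup_in Z 1 (v i) (phi i).
  move=> lt_i; have [_ _ phi_v] := proper i lt_i.
  by apply: rootgroup_in1 => // l; exists i => //; exists l.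
have v_neq0 i : i < k -> (v i != 0)%R by case/proper.
have phi_neq0 i : i < k -> (phi i != 0)%R by case/proper.
have edge_v i : i.+1 < k -> (pairing (phi i.+1) (v i) != 0)%R by move/path/eqP.
have one_way3' : k = 3 -> pairing (phi 0) (v 1) = 0%R \/ pairing (phi 1) (v 2) = 0%R.
  by case/one_way3 => /one_way_pairing; [left | right].
have one_way45' : 4 <= k <= 5 ->
    pairing (phi 0) (v 1) = 0%R /\ pairing (phi k.-2) (v k.-1) = 0%R.
  by case/one_way45 => /one_way_pairing p10 /one_way_pairing p_end.
split.
- apply: short_root_tv_line.
  exact: short_root_path_ends root_v phi_neq0 edge_v k_range one_way3' one_way45'.
- apply: short_root_trmx_tv.
  exact: short_root_path_ends_trmx root_v v_neq0 edge_v k_range one_way3' one_way45'.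
Qed.
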